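(* For every integer $l\geq 0$, with $m=2^l$ and $n=4m+1$, the oriented graph $T_l$ is $n$-nice.
   Context: For $l\ge0$, let $m=2^l$, $n=4m+1$. The oriented graph $T_l$ has vertex set $\{x_i : i\in\mathbb{Z}/n\mathbb{Z}\}$ (the vertex $x_i$ being identified with the $m$-tuple $(i,i+1,\dots,i+m-1)$ of elements of $\mathbb{Z}/n\mathbb{Z}$), and arcs $x_ix_{i+m}$ and $x_ix_{i+m+1}$ for every $i$ (indices mod $n$). For a vertex $x$ let $N^+(x)$ (resp. $N^-(x)$) be its set of out-neighbors (resp. in-neighbors), and for a set $S$ let $N^{\pm}(S)=\bigcup_{x\in S}N^{\pm}(x)$. For $\alpha=(\alpha_1,\dots,\alpha_k)\in\{+,-\}^k$ define $N^\alpha(x)=N^{\alpha_1}(x)$ if $k=1$ and $N^{\alpha}(x)=N^{\alpha_1}(N^{(\alpha_2,\dots,\alpha_k)}(x))$ if $k\ge2$. An oriented graph $G$ is $k$-nice if $N^\alpha(x)=V(G)$ for every $\alpha\in\{+,-\}^k$ and every $x\in V(G)$. *)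

From mathcomp Require Import all_boot.
Set Implicit Arguments. Unset Strict Implicit. Unset Printing Implicit Defensive.

(* An oriented graph on a finite vertex type T, given by its arc relation
   [arc x y] meaning "x -> y". Signs: [true] = "+", [false] = "-". *)
Section Nbhd.
Variable T : finType.
Variable arc : rel T.

Definition Nout (x : T) : {set T} := [set y | arc x y].
Definition Nin (x : T) : {set T} := [set y | arc y x].
Definition N1 (s : bool) (x : T) : {set T} := if s then Nout x else Nin x.

Definition Nset (s : bool) (S : {set T}) : {set T} := \bigcup_(x in S) N1 s x.

Definition Nalpha (alpha : seq bool) (x : T) : {set T} :=
  foldr Nset [set x] alpha.

Definition nice (k : nat) : Prop :=
  forall (alpha : seq bool), size alpha = k ->
  forall x : T, Nalpha alpha x = [set: T].
End Nbhd.

(* The oriented graph T_l: m = 2^l, n = 4m+1, vertices x_i, i in Z/nZ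
   (represented by 'I_n), arcs x_i -> x_{i+m} and x_i -> x_{i+m+1} (mod n). *)
Definition Tm (l : nat) : nat := 2 ^ l.
Definition Tn (l : nat) : nat := 4 * Tm l + 1.

Definition Tarc (l : nat) : rel 'I_(Tn l) :=
  fun x y => (val y == (val x + Tm l) %% Tn l)
          || (val y == (val x + Tm l + 1) %% Tn l).

(* In the circulant digraph on Z/n with arcs i -> i+a and i -> i+a+1, an
   out-step moves by a or a+1 and an in-step by -(a+1) or -a.  Hence if a set
   contains a window of d+1 consecutive residues, its out- or in-neighbourhood
   contains a window of d+2 consecutive residues.  Starting from {x}, after k
   steps the window has k+1 residues, which is all of Z/n once k+1 >= n.  For
   T_l we have n = 4m+1 and k = n, so nothing about m = 2^l is needed. *)
From mathcomp Require Import all_boot.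
From mathcomp Require Import zify.

Section Circulant.

Variables (n a : nat).

Definition circ_arc : rel 'I_n :=
  fun x y => (val y == (val x + a) %% n) || (val y == (val x + a + 1) %% n).

(* [shift false] is -(a+1) modulo n, written without subtraction. *)
Definition shift (s : bool) : nat := if s then a else n.-1 * a.+1.

Hypothesis n_gt0 : 0 < n.

Definition residue (k : nat) : 'I_n := Ordinal (ltn_pmod k n_gt0).

Lemma shift_false_addS : shift false + a.+1 = a.+1 * n.
Proof. by rewrite /= -mulSnr prednK // mulnC. Qed.

Lemma Nset_window s (S : {set 'I_n}) b d :
    (forall i, i <= d -> residue (b + i) \in S) ->
  forall i, i <= d.+1 -> residue (b + shift s + i) \in Nset circ_arc s S.
Proof.
move=> winS i le_i; apply/bigcupP.
exists (residue (b + i.-1)); first by apply: winS; lia.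
case: s; rewrite /N1 /Nout /Nin inE /circ_arc /= -!addnA !modnDml;
  case: i le_i => [|i] _ /=; apply/orP.
- by left; rewrite addn0 addn0.
- by right; apply/eqP; congr (_ %% _); lia.
- right; apply/eqP; rewrite -(modnMDl a.+1 (b + 0)); congr (_ %% _).
  by move: shift_false_addS => /=; lia.
- left; apply/eqP; rewrite -(modnMDl a.+1 (b + i)); congr (_ %% _).
  by move: shift_false_addS => /=; lia.
Qed.

Lemma Nalpha_window alpha (x : 'I_n) i : i <= size alpha ->
  residue (x + \sum_(s <- alpha) shift s + i) \in Nalpha circ_arc alpha x.
Proof.
elim: alpha i => [|s alpha IH] i le_i.
  have -> : residue (x + \sum_(s <- [::]) shift s + i) = x.
    apply: val_inj; move: le_i; rewrite /= big_nil leqn0 => /eqP->.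
    by rewrite !addn0 modn_small.
  exact: set11.
have -> : residue (x + \sum_(t <- s :: alpha) shift t + i)
        = residue (x + \sum_(t <- alpha) shift t + shift s + i).
  by apply: val_inj; rewrite /= big_cons; congr (_ %% _); lia.
exact: Nset_window IH _ le_i.
Qed.

Lemma window_setT (S : {set 'I_n}) b d : n <= d.+1 ->
  (forall i, i <= d -> residue (b + i) \in S) -> S = [set: 'I_n].
Proof.
move=> le_n winS; apply/setP => y; rewrite inE.
have -> : y = residue (b + (y + n.-1 * b) %% n).
  apply: val_inj; rewrite /= modnDmr.
  have -> : b + (y + n.-1 * b) = b * n + y.
    by rewrite addnCA -mulSn prednK // mulnC addnC.
  by rewrite modnMDl modn_small.
by apply: winS; rewrite -ltnS; apply: leq_trans le_n; apply: ltn_pmod.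
Qed.

Lemma circ_arc_nice k : n <= k.+1 -> nice circ_arc k.
Proof.
move=> le_n alpha size_alpha x; apply: (@window_setT _ _ k) => // i le_i.
by apply: Nalpha_window; rewrite size_alpha.
Qed.

End Circulant.

Theorem lemma11 (l : nat) : nice (@Tarc l) (Tn l).
Proof.
have Tn_gt0 : 0 < Tn l by rewrite /Tn addn1.
exact: (@circ_arc_nice (Tn l) (Tm l) Tn_gt0 _ (leqnSn _)).
Qed.
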